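(* Let $\sigma > -2$ and $p < -1-\sigma$, and set \[ a = \frac{\sigma+2}{1-p} \in (0,1), \qquad c_a = \big(a(1-a)\big)^{1/(p-1)}, \qquad u_a(x) = c_a x^a . \] Then there exists a one-parameter family $\{u^\alpha\}_{\alpha>0}$ of positive functions in $C^2(0,+\infty)$, each solving \[ u''(x) + x^\sigma u(x)^p = 0 \quad \text{for } x>0, \] such that $\lim_{x\searrow 0} u^\alpha(x)/u_a(x) = 1$ for every $\alpha>0$, and such that whenever $\alpha_1 > \alpha_2 > 0$, \[ u^{\alpha_1}(x) > u^{\alpha_2}(x) > u_a(x) \quad \text{for all } x > 0 . \]
   Context: The function $u_a$ is itself a positive solution of the same equation on $(0,+\infty)$. *)

From Stdlib Require Import Reals.
From Coquelicot Require Import Coquelicot.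
Open Scope R_scope.

Definition C2_on_pos (u : R -> R) : Prop :=
  forall x, 0 < x ->
    ex_derive u x /\ ex_derive (Derive u) x /\ continuous (Derive_n u 2) x.

Definition exp_a (sigma p : R) : R := (sigma + 2) / (1 - p).

Definition c_a (sigma p : R) : R :=
  let a := exp_a sigma p in Rpower (a * (1 - a)) (1 / (p - 1)).

Definition u_a (sigma p : R) (x : R) : R :=
  c_a sigma p * Rpower x (exp_a sigma p).

From Stdlib Require Import Reals Lra Lia.
From Coquelicot Require Import Coquelicot.
Open Scope R_scope.

(* The substitution u(x) = x^a (c + w(ln x)), with c = c_a, turns u'' + x^sigma u^p = 0 into the
   autonomous equation
     w'' + (2a - 1) w' = m (c + w) - (c + w)^p,      m = a (1 - a) = c^(p-1),
   whose linearisation at w = 0 has characteristic roots lam > 0 > lm.  A solution with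
   w(t) ~ eps e^(lam t) at -oo is the fixed point of the variation-of-constants operator on the
   functions bounded by R (e^(2 lam t) + e^(beta t)); for small eps, R and large beta it is a
   contraction.  Since (e^((2a-1) t) w')' = e^((2a-1) t) (m (c + w) - (c + w)^p) > 0 as long as
   w > 0, the solution stays positive and increasing.  The scaling u(x) -> alpha^(-a) u(alpha x)
   then gives U^alpha(x) = x^a (c + w(ln x + ln alpha)), increasing in alpha and above
   u_a(x) = c x^a. *)

Ltac solve_continuous :=
  apply (ex_derive_continuous (K := R_AbsRing) (V := R_NormedModule)); auto_derive; auto.

Lemma exp_le_mono a b : a <= b -> exp a <= exp b.
Proof. intros [H | ->]; [left; apply exp_increasing | ]; lra. Qed.

Lemma exp_mul_INR a n : exp (a * INR n) = exp a ^ n.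
Proof.
  induction n as [| n IH]; [rewrite Rmult_0_r, exp_0; reflexivity |].
  rewrite S_INR, Rmult_plus_distr_l, Rmult_1_r, exp_plus, IH. simpl. ring.
Qed.

Lemma is_derive_ext_R (f g : R -> R) x l : (forall t, f t = g t) -> is_derive f x l -> is_derive g x l.
Proof. apply is_derive_ext. Qed.

Lemma locally_pos x : 0 < x -> locally x (fun y => 0 < y).
Proof.
  intros Hx. exists (mkposreal x Hx). intros y Hy.
  apply Rabs_def2 in Hy. simpl in Hy. unfold minus, plus, opp in Hy. simpl in Hy. lra.
Qed.

Lemma geometric_eventually_small A q eps : 0 <= q < 1 -> 0 < eps ->
  exists N, forall n, (N <= n)%nat -> A * q ^ n < eps.
Proof.
  intros Hq He.
  assert (L : is_lim_seq (fun n => A * q ^ n) (A * 0)).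
  { apply (is_lim_seq_scal_l _ A 0), is_lim_seq_geom. rewrite Rabs_pos_eq; lra. }
  rewrite Rmult_0_r in L.
  destruct (proj2 (is_lim_seq_spec _ _) L (mkposreal eps He)) as [N HN].
  exists N. intros n Hn. specialize (HN n Hn). simpl in HN. apply Rabs_def2 in HN. lra.
Qed.

Lemma Rabs_le_geometric_0 x A q : 0 <= q < 1 -> (forall n, Rabs x <= A * q ^ n) -> x = 0.
Proof.
  intros Hq Hx. destruct (Req_dec x 0) as [| Hne]; [assumption | exfalso].
  destruct (geometric_eventually_small A q (Rabs x) Hq) as [N HN]; [apply Rabs_pos_lt, Hne |].
  specialize (HN N (le_n N)). specialize (Hx N). lra.
Qed.

Lemma geometric_steps_close (u : nat -> R) (A q : R) : 0 <= q < 1 ->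
  (forall n, Rabs (u (S n) - u n) <= A * q ^ n) ->
  forall n m, (n <= m)%nat -> Rabs (u m - u n) <= A / (1 - q) * (q ^ n - q ^ m).
Proof.
  intros Hq Hstep n m Hnm. induction Hnm as [| m Hnm IH].
  - rewrite !Rminus_diag, Rabs_R0. lra.
  - replace (u (S m) - u n) with ((u (S m) - u m) + (u m - u n)) by ring.
    eapply Rle_trans; [apply Rabs_triang |].
    specialize (Hstep m). simpl pow.
    replace (A / (1 - q) * (q ^ n - q * q ^ m)) with (A * q ^ m + A / (1 - q) * (q ^ n - q ^ m))
      by (field; lra).
    lra.
Qed.

Lemma geometric_steps_cv (u : nat -> R) (A q : R) : 0 <= q < 1 ->
  (forall n, Rabs (u (S n) - u n) <= A * q ^ n) ->
  ex_finite_lim_seq u /\ forall n, Rabs (real (Lim_seq u) - u n) <= A / (1 - q) * q ^ n.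
Proof.
  intros Hq Hstep.
  assert (HA : 0 <= A / (1 - q)).
  { specialize (Hstep 0%nat). pose proof (Rabs_pos (u 1%nat - u 0%nat)). simpl in Hstep.
    apply Rdiv_le_0_compat; lra. }
  assert (Hclose : forall n m, (n <= m)%nat -> Rabs (u m - u n) <= A / (1 - q) * q ^ n).
  { intros n m Hnm. eapply Rle_trans; [apply (geometric_steps_close u A q); auto |].
    pose proof (pow_le q m). nra. }
  assert (Hcv : ex_finite_lim_seq u).
  { apply ex_lim_seq_cauchy_corr. intros eps.
    destruct (geometric_eventually_small (A / (1 - q)) q eps Hq (cond_pos eps)) as [N HN].
    exists N. intros n m Hn Hm. destruct (Nat.le_ge_cases n m) as [Hnm | Hmn].
    - rewrite Rabs_minus_sym. eapply Rle_lt_trans; [apply Hclose, Hnm | apply HN, Hn].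
    - eapply Rle_lt_trans; [apply Hclose, Hmn | apply HN, Hm]. }
  split; [exact Hcv |]. intros n.
  destruct Hcv as [l Hl]. rewrite (is_lim_seq_unique _ _ Hl). simpl.
  assert (Hlim : is_lim_seq (fun m => Rabs (u m - u n)) (Rabs (l - u n))).
  { apply (is_lim_seq_abs _ (l - u n)), is_lim_seq_minus'; [exact Hl | apply is_lim_seq_const]. }
  exact (is_lim_seq_le_loc _ _ _ _ ltac:(exists n; intros m Hm; apply Hclose, Hm)
    Hlim (is_lim_seq_const _)).
Qed.

Definition continuous_everywhere (g : R -> R) : Prop := forall x, continuous g x.

Definition exp_bounded (g : R -> R) (M gam : R) : Prop :=
  forall s, s <= 0 -> Rabs (g s) <= M * exp (gam * s).

(* The improper integral of [g] over [(-oo, t]]; it is junk unless [g] is integrable at [-oo]. *)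
Definition RInt_minf (g : R -> R) (t : R) : R :=
  real (Lim_seq (fun n => RInt g (- INR n) 0)) + RInt g 0 t.

Lemma ex_RInt_cont g a b : continuous_everywhere g -> ex_RInt g a b.
Proof. intros Hg. apply (ex_RInt_continuous (V := R_CompleteNormedModule)). intros; apply Hg. Qed.

Lemma continuous_scal_exp M gam : continuous_everywhere (fun s => M * exp (gam * s)).
Proof. intros s. solve_continuous. Qed.

Lemma exp_bounded_scal_exp M gam : exp_bounded (fun s => M * exp (gam * s)) (Rabs M) gam.
Proof.
  intros s _. rewrite Rabs_mult, (Rabs_pos_eq (exp _)) by (left; apply exp_pos). lra.
Qed.

Lemma RInt_scal_exp M gam a b : gam <> 0 ->
  RInt (fun s => M * exp (gam * s)) a b = M * (exp (gam * b) - exp (gam * a)) / gam.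
Proof.
  intros Hgam. apply is_RInt_unique.
  replace (M * (exp (gam * b) - exp (gam * a)) / gam) with
    (minus ((fun s => M * exp (gam * s) / gam) b) ((fun s => M * exp (gam * s) / gam) a)).
  2: unfold minus, plus, opp; simpl; field; auto.
  apply (is_RInt_derive (V := R_CompleteNormedModule) (fun s => M * exp (gam * s) / gam)).
  - intros x _. auto_derive; auto. field; auto.
  - intros x _. solve_continuous.
Qed.

Lemma exp_bounded_nonneg g M gam : exp_bounded g M gam -> 0 <= M.
Proof.
  intros Hg. specialize (Hg 0 (Rle_refl 0)). rewrite Rmult_0_r, exp_0 in Hg.
  pose proof (Rabs_pos (g 0)). lra.
Qed.

Section ExpBoundedIntegral.

Variables (g : R -> R) (M gam : R).
Hypothesis g_cont : continuous_everywhere g.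
Hypothesis g_bounded : exp_bounded g M gam.
Hypothesis gam_pos : 0 < gam.

Lemma RInt_abs_le_exp a b : a <= b -> b <= 0 -> Rabs (RInt g a b) <= M * exp (gam * b) / gam.
Proof.
  intros Hab Hb.
  eapply Rle_trans; [apply abs_RInt_le; auto; apply ex_RInt_cont; auto |].
  eapply Rle_trans; [apply RInt_le with (g := fun s => M * exp (gam * s)); auto |].
  - apply (ex_RInt_continuous (V := R_CompleteNormedModule)).
    intros; apply continuous_Rabs_comp, g_cont.
  - apply ex_RInt_cont, continuous_scal_exp.
  - intros x Hx. apply g_bounded. lra.
  - rewrite RInt_scal_exp by lra. pose proof (exp_pos (gam * a)).
    pose proof (exp_bounded_nonneg g M gam g_bounded).
    unfold Rdiv. apply Rmult_le_compat_r; [left; apply Rinv_0_lt_compat; lra | nra].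
Qed.

Lemma ex_lim_seq_RInt_minf : ex_finite_lim_seq (fun n => RInt g (- INR n) 0).
Proof.
  apply (geometric_steps_cv _ (M / gam) (exp (- gam))).
  - split; [left; apply exp_pos |]. rewrite <- exp_0. apply exp_increasing. lra.
  - intros n. rewrite S_INR.
    assert (E : RInt g (- (INR n + 1)) (- INR n) + RInt g (- INR n) 0 = RInt g (- (INR n + 1)) 0)
      by (apply (RInt_Chasles (V := R_CompleteNormedModule)); apply ex_RInt_cont; auto).
    replace (RInt g (- (INR n + 1)) 0 - RInt g (- INR n) 0)
      with (RInt g (- (INR n + 1)) (- INR n)) by lra.
    eapply Rle_trans; [apply RInt_abs_le_exp; pose proof (pos_INR n); lra |].
    rewrite <- exp_mul_INR. right. replace (gam * - INR n) with (- gam * INR n) by ring. field. lra.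
Qed.

Lemma is_lim_seq_RInt_minf t : is_lim_seq (fun n => RInt g (- INR n) t) (RInt_minf g t).
Proof.
  apply is_lim_seq_ext with (fun n => RInt g (- INR n) 0 + RInt g 0 t).
  { intros n. rewrite <- (RInt_Chasles g (- INR n) 0 t) by (apply ex_RInt_cont; auto). reflexivity. }
  apply is_lim_seq_plus'; [| apply is_lim_seq_const].
  destruct ex_lim_seq_RInt_minf as [l Hl]. rewrite (is_lim_seq_unique _ _ Hl). exact Hl.
Qed.

End ExpBoundedIntegral.

Lemma RInt_minf_unique g t (l : R) : continuous_everywhere g ->
  is_lim_seq (fun n => RInt g (- INR n) t) l -> RInt_minf g t = l.
Proof.
  intros Hg Hl. unfold RInt_minf.
  assert (H0 : is_lim_seq (fun n => RInt g (- INR n) 0) (l - RInt g 0 t)).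
  { apply is_lim_seq_ext with (fun n => RInt g (- INR n) t - RInt g 0 t).
    - intros n.
      assert (E : RInt g (- INR n) 0 + RInt g 0 t = RInt g (- INR n) t)
        by (apply (RInt_Chasles (V := R_CompleteNormedModule)); apply ex_RInt_cont; auto).
      lra.
    - apply is_lim_seq_minus'; [exact Hl | apply is_lim_seq_const]. }
  rewrite (is_lim_seq_unique _ _ H0). simpl. ring.
Qed.

Lemma is_derive_RInt_minf g t : continuous_everywhere g -> is_derive (RInt_minf g) t (g t).
Proof.
  intros Hg. unfold RInt_minf.
  set (C := real (Lim_seq (fun n => RInt g (- INR n) 0))).
  replace (g t) with (0 + g t) by ring.
  apply (is_derive_plus (fun _ => C) (fun u => RInt g 0 u)).
  - apply (is_derive_const (K := R_AbsRing) (V := R_NormedModule)).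
  - apply (is_derive_RInt (V := R_CompleteNormedModule)) with (a := 0); [| apply Hg].
    apply filter_forall. intros; apply (RInt_correct (V := R_CompleteNormedModule)), ex_RInt_cont; auto.
Qed.

Lemma RInt_minf_scal_exp M gam t : 0 < gam ->
  RInt_minf (fun s => M * exp (gam * s)) t = M * exp (gam * t) / gam.
Proof.
  intros Hgam. apply RInt_minf_unique; [apply continuous_scal_exp |].
  apply is_lim_seq_ext with (fun n => M * exp (gam * t) / gam - M / gam * exp (- gam) ^ n).
  { intros n. rewrite RInt_scal_exp, <- exp_mul_INR by lra.
    replace (gam * - INR n) with (- gam * INR n) by ring. field. lra. }
  assert (L : is_lim_seq (fun n => M * exp (gam * t) / gam - M / gam * exp (- gam) ^ n)
    (M * exp (gam * t) / gam - M / gam * 0)).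
  { apply is_lim_seq_minus'; [apply is_lim_seq_const |].
    apply (is_lim_seq_scal_l _ (M / gam) 0), is_lim_seq_geom.
    rewrite Rabs_pos_eq by (left; apply exp_pos). rewrite <- exp_0. apply exp_increasing. lra. }
  rewrite Rmult_0_r, Rminus_0_r in L. exact L.
Qed.

Lemma RInt_minf_ext g1 g2 t : (forall s, g1 s = g2 s) -> RInt_minf g1 t = RInt_minf g2 t.
Proof.
  intros H. unfold RInt_minf. rewrite (RInt_ext g1 g2) by auto.
  rewrite (Lim_seq_ext _ (fun n => RInt g2 (- INR n) 0)); auto.
  intros n. apply RInt_ext. auto.
Qed.

Lemma RInt_minf_minus g h Mg gg Mh gh t :
  continuous_everywhere g -> exp_bounded g Mg gg -> 0 < gg ->
  continuous_everywhere h -> exp_bounded h Mh gh -> 0 < gh ->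
  RInt_minf (fun s => g s - h s) t = RInt_minf g t - RInt_minf h t.
Proof.
  intros Hg Bg Pg Hh Bh Ph. apply RInt_minf_unique.
  { intros s. apply (continuous_minus (V := R_NormedModule)); auto. }
  apply is_lim_seq_ext with (fun n => RInt g (- INR n) t - RInt h (- INR n) t).
  { intros n. symmetry. apply (RInt_minus (V := R_CompleteNormedModule)); apply ex_RInt_cont; auto. }
  apply is_lim_seq_minus'; eapply is_lim_seq_RInt_minf; eauto.
Qed.

Lemma RInt_minf_abs_le g h Mg gg Mh gh t :
  continuous_everywhere g -> exp_bounded g Mg gg -> 0 < gg ->
  continuous_everywhere h -> exp_bounded h Mh gh -> 0 < gh ->
  (forall s, s <= t -> Rabs (g s) <= h s) -> Rabs (RInt_minf g t) <= RInt_minf h t.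
Proof.
  intros Hg Bg Pg Hh Bh Ph Hle.
  refine (is_lim_seq_le_loc _ _ _ _ _ (is_lim_seq_abs _ _ (is_lim_seq_RInt_minf g Mg gg Hg Bg Pg t))
    (is_lim_seq_RInt_minf h Mh gh Hh Bh Ph t)).
  destruct (INR_unbounded (- t)) as [N HN]. exists N. intros n Hn.
  assert (INR N <= INR n) by (apply le_INR; auto).
  eapply Rle_trans; [apply abs_RInt_le; [lra | apply ex_RInt_cont; auto] |].
  apply RInt_le; [lra | | apply ex_RInt_cont; auto | intros x Hx; apply Hle; lra].
  apply (ex_RInt_continuous (V := R_CompleteNormedModule)).
  intros; apply continuous_Rabs_comp, Hg.
Qed.

Definition expmul (l : R) (f : R -> R) (s : R) : R := exp (l * s) * f s.

(* [duhamel l f t] is [int_(-oo)^t e^(l (t - s)) f s ds], the solution of [y' = l y + f] small at [-oo]. *)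
Definition duhamel (l : R) (f : R -> R) (t : R) : R := exp (l * t) * RInt_minf (expmul (- l) f) t.

Lemma exp_cancel l t x : exp (l * t) * (exp (- l * t) * x) = x.
Proof.
  rewrite <- Rmult_assoc, <- exp_plus. replace (l * t + - l * t) with 0 by ring. rewrite exp_0; ring.
Qed.

Lemma continuous_expmul l f : continuous_everywhere f -> continuous_everywhere (expmul l f).
Proof. intros Hf s. apply (continuous_mult (K := R_AbsRing)); [solve_continuous | apply Hf]. Qed.

Lemma is_derive_duhamel l f t : continuous_everywhere f ->
  is_derive (duhamel l f) t (l * duhamel l f t + f t).
Proof.
  intros Hf. unfold duhamel.
  pose proof (is_derive_RInt_minf _ t (continuous_expmul (- l) f Hf)) as HI.
  replace (l * (exp (l * t) * RInt_minf (expmul (- l) f) t) + f t)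
    with (l * exp (l * t) * RInt_minf (expmul (- l) f) t + exp (l * t) * expmul (- l) f t)
    by (unfold expmul; rewrite exp_cancel; ring).
  apply (is_derive_mult (fun t => exp (l * t)) (RInt_minf (expmul (- l) f)));
    [| exact HI | intros; apply Rmult_comm].
  auto_derive; auto. ring.
Qed.

Lemma is_derive_lincomb (A B : R -> R) a' b' t (u v : R) :
  is_derive A t a' -> is_derive B t b' -> is_derive (fun t => u * A t - v * B t) t (u * a' - v * b').
Proof.
  intros HA HB. apply (is_derive_minus (fun t => u * A t) (fun t => v * B t)); apply is_derive_scal; auto.
Qed.

Definition exp2_bounded (lam beta : R) (f : R -> R) (M1 M2 : R) : Prop :=
  forall s, Rabs (f s) <= M1 * exp (2 * lam * s) + M2 * exp (beta * s).

Section VariationOfConstants.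

Variables lam lm : R.
Hypothesis lm_lt_lam : lm < lam.

(* Variation of constants for [y'' - (lam + lm) y' + lam lm y = f]; [varconst_d f] is the derivative. *)
Definition varconst (f : R -> R) (t : R) : R := (duhamel lam f t - duhamel lm f t) / (lam - lm).

Definition varconst_d (f : R -> R) (t : R) : R :=
  (lam * duhamel lam f t - lm * duhamel lm f t) / (lam - lm).

Lemma is_derive_varconst f t : continuous_everywhere f -> is_derive (varconst f) t (varconst_d f t).
Proof.
  intros Hf.
  apply is_derive_ext_R with (fun t => / (lam - lm) * duhamel lam f t - / (lam - lm) * duhamel lm f t).
  { intros s. unfold varconst. field. lra. }
  replace (varconst_d f t) with
    (/ (lam - lm) * (lam * duhamel lam f t + f t) - / (lam - lm) * (lm * duhamel lm f t + f t))
    by (unfold varconst_d; field; lra).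
  apply is_derive_lincomb; apply is_derive_duhamel; auto.
Qed.

Lemma is_derive_varconst_d f t : continuous_everywhere f ->
  is_derive (varconst_d f) t ((lam + lm) * varconst_d f t - lam * lm * varconst f t + f t).
Proof.
  intros Hf.
  apply is_derive_ext_R with
    (fun t => lam / (lam - lm) * duhamel lam f t - lm / (lam - lm) * duhamel lm f t).
  { intros s. unfold varconst_d. field. lra. }
  replace ((lam + lm) * varconst_d f t - lam * lm * varconst f t + f t) with
    (lam / (lam - lm) * (lam * duhamel lam f t + f t) - lm / (lam - lm) * (lm * duhamel lm f t + f t))
    by (unfold varconst_d, varconst; field; lra).
  apply is_derive_lincomb; apply is_derive_duhamel; auto.
Qed.

Lemma continuous_varconst f : continuous_everywhere f -> continuous_everywhere (varconst f).
Proof.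
  intros Hf s. apply (ex_derive_continuous (K := R_AbsRing) (V := R_NormedModule)).
  eexists. apply is_derive_varconst; auto.
Qed.

Variable beta : R.
Hypothesis lam_pos : 0 < lam.
Hypothesis lm_neg : lm < 0.
Hypothesis beta_ge : 2 * lam <= beta.

Lemma exp_bounded_expmul l f M1 M2 : l < 2 * lam -> 0 <= M2 -> exp2_bounded lam beta f M1 M2 ->
  exp_bounded (expmul (- l) f) (M1 + M2) (2 * lam - l).
Proof.
  intros Hl HM Hf s Hs. unfold expmul. rewrite Rabs_mult, Rabs_pos_eq by (left; apply exp_pos).
  specialize (Hf s). pose proof (exp_pos (- l * s)).
  assert (E1 : exp (- l * s) * exp (2 * lam * s) = exp ((2 * lam - l) * s))
    by (rewrite <- exp_plus; f_equal; ring).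
  assert (E2 : exp (- l * s) * exp (beta * s) = exp ((beta - l) * s))
    by (rewrite <- exp_plus; f_equal; ring).
  assert (exp ((beta - l) * s) <= exp ((2 * lam - l) * s)) by (apply exp_le_mono; nra).
  apply Rle_trans with (exp (- l * s) * (M1 * exp (2 * lam * s) + M2 * exp (beta * s)));
    [apply Rmult_le_compat_l; lra |].
  replace (exp (- l * s) * (M1 * exp (2 * lam * s) + M2 * exp (beta * s))) with
    (M1 * (exp (- l * s) * exp (2 * lam * s)) + M2 * (exp (- l * s) * exp (beta * s))) by ring.
  rewrite E1, E2. nra.
Qed.

Lemma duhamel_abs_le l f M1 M2 t : l < 2 * lam -> continuous_everywhere f -> 0 <= M2 ->
  exp2_bounded lam beta f M1 M2 -> t <= 0 ->
  Rabs (duhamel l f t) <= (M1 + M2) * exp (2 * lam * t) / (2 * lam - l).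
Proof.
  intros Hl Hf HM Hb Ht. unfold duhamel.
  rewrite Rabs_mult, Rabs_pos_eq by (left; apply exp_pos).
  assert (HI : Rabs (RInt_minf (expmul (- l) f) t) <= (M1 + M2) * exp ((2 * lam - l) * t) / (2 * lam - l)).
  { rewrite <- RInt_minf_scal_exp by lra.
    apply RInt_minf_abs_le with (M1 + M2) (2 * lam - l) (Rabs (M1 + M2)) (2 * lam - l);
      try lra; auto using continuous_expmul, continuous_scal_exp, exp_bounded_scal_exp, exp_bounded_expmul.
    intros s Hs. apply exp_bounded_expmul; auto. lra. }
  replace ((M1 + M2) * exp (2 * lam * t) / (2 * lam - l)) with
    (exp (l * t) * ((M1 + M2) * exp ((2 * lam - l) * t) / (2 * lam - l)))
    by (replace (2 * lam * t) with (l * t + (2 * lam - l) * t) by ring; rewrite exp_plus; field; lra).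
  apply Rmult_le_compat_l; [left; apply exp_pos | exact HI].
Qed.

Lemma varconst_d_exp_bound f M1 M2 : continuous_everywhere f -> 0 <= M2 ->
  exp2_bounded lam beta f M1 M2 ->
  exists B, forall t, t <= 0 -> Rabs (varconst_d f t) <= B * exp (2 * lam * t).
Proof.
  intros Hf HM Hb.
  exists ((lam / lam + - lm / (2 * lam - lm)) * (M1 + M2) / (lam - lm)). intros t Ht.
  pose proof (duhamel_abs_le lam f M1 M2 t ltac:(lra) Hf HM Hb Ht) as H1.
  pose proof (duhamel_abs_le lm f M1 M2 t ltac:(lra) Hf HM Hb Ht) as H2.
  unfold varconst_d, Rdiv. rewrite Rabs_mult, (Rabs_pos_eq (/ (lam - lm)))
    by (left; apply Rinv_0_lt_compat; lra).
  replace ((lam * / lam + - lm * / (2 * lam - lm)) * (M1 + M2) * / (lam - lm) * exp (2 * lam * t))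
    with ((lam * ((M1 + M2) * exp (2 * lam * t) / (2 * lam - lam))
          + - lm * ((M1 + M2) * exp (2 * lam * t) / (2 * lam - lm))) * / (lam - lm))
    by (field; lra).
  apply Rmult_le_compat_r; [left; apply Rinv_0_lt_compat; lra |].
  eapply Rle_trans; [apply Rabs_triang |]. rewrite Rabs_Ropp, !Rabs_mult, (Rabs_pos_eq lam), (Rabs_left lm)
    by lra.
  apply Rplus_le_compat; apply Rmult_le_compat_l; lra.
Qed.

Lemma is_lim_seq_duhamel l f M1 M2 t : l < 2 * lam -> continuous_everywhere f -> 0 <= M2 ->
  exp2_bounded lam beta f M1 M2 ->
  is_lim_seq (fun n => RInt (fun s => exp (l * (t - s)) * f s) (- INR n) t) (duhamel l f t).
Proof.
  intros Hl Hf HM Hb.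
  apply is_lim_seq_ext with (fun n => exp (l * t) * RInt (expmul (- l) f) (- INR n) t).
  { intros n. rewrite <- (RInt_scal (V := R_CompleteNormedModule))
      by (apply ex_RInt_cont, continuous_expmul; auto).
    apply RInt_ext. intros s _. unfold expmul, scal; simpl. unfold mult; simpl.
    replace (l * (t - s)) with (l * t + - l * s) by ring. rewrite exp_plus. ring. }
  apply (is_lim_seq_scal_l _ (exp (l * t)) (RInt_minf (expmul (- l) f) t)).
  eapply is_lim_seq_RInt_minf; [apply continuous_expmul; auto | apply exp_bounded_expmul; eauto | lra].
Qed.

Lemma is_lim_seq_varconst f M1 M2 t : continuous_everywhere f -> 0 <= M2 ->
  exp2_bounded lam beta f M1 M2 ->
  is_lim_seq (fun n => RInt (fun s => (exp (lam * (t - s)) - exp (lm * (t - s))) * f s) (- INR n) t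
    / (lam - lm)) (varconst f t).
Proof.
  intros Hf HM Hb.
  assert (Hc : forall l, continuous_everywhere (fun s => exp (l * (t - s)) * f s)).
  { intros l s. apply (continuous_mult (K := R_AbsRing)); [solve_continuous | apply Hf]. }
  apply is_lim_seq_ext with (fun n => (RInt (fun s => exp (lam * (t - s)) * f s) (- INR n) t
    - RInt (fun s => exp (lm * (t - s)) * f s) (- INR n) t) / (lam - lm)).
  { intros n. f_equal. rewrite <- (RInt_minus (V := R_CompleteNormedModule)) by apply ex_RInt_cont, Hc.
    apply RInt_ext. intros s _. unfold minus, plus, opp; simpl. ring. }
  apply (is_lim_seq_scal_r _ (/ (lam - lm)) (duhamel lam f t - duhamel lm f t)).
  apply is_lim_seq_minus'; eapply is_lim_seq_duhamel; eauto; lra.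
Qed.

Lemma varconst_abs_le f g Mf1 Mf2 Mg1 Mg2 t :
  continuous_everywhere f -> 0 <= Mf2 -> exp2_bounded lam beta f Mf1 Mf2 ->
  continuous_everywhere g -> 0 <= Mg2 -> exp2_bounded lam beta g Mg1 Mg2 ->
  (forall s, Rabs (f s) <= g s) -> Rabs (varconst f t) <= varconst g t.
Proof.
  intros Hf HMf Hbf Hg HMg Hbg Hle.
  set (kernel := fun h s => (exp (lam * (t - s)) - exp (lm * (t - s))) * h s).
  assert (Hkc : forall h, continuous_everywhere h -> continuous_everywhere (kernel h)).
  { intros h Hh s. apply (continuous_mult (K := R_AbsRing)); [solve_continuous | apply Hh]. }
  refine (is_lim_seq_le_loc _ _ _ _ _ (is_lim_seq_abs _ _ (is_lim_seq_varconst f Mf1 Mf2 t Hf HMf Hbf))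
    (is_lim_seq_varconst g Mg1 Mg2 t Hg HMg Hbg)).
  destruct (INR_unbounded (- t)) as [N HN]. exists N. intros n Hn.
  assert (INR N <= INR n) by (apply le_INR; auto).
  unfold Rdiv. rewrite Rabs_mult, (Rabs_pos_eq (/ _)) by (left; apply Rinv_0_lt_compat; lra).
  apply Rmult_le_compat_r; [left; apply Rinv_0_lt_compat; lra |].
  eapply Rle_trans; [apply abs_RInt_le; [lra | apply ex_RInt_cont, Hkc, Hf] |].
  apply RInt_le; [lra | | apply ex_RInt_cont, Hkc, Hg |].
  - apply (ex_RInt_continuous (V := R_CompleteNormedModule)).
    intros; apply continuous_Rabs_comp, Hkc, Hf.
  - intros s Hs. unfold kernel.
    assert (exp (lm * (t - s)) <= exp (lam * (t - s))) by (apply exp_le_mono; nra).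
    rewrite Rabs_mult, Rabs_pos_eq by lra. apply Rmult_le_compat_l; [lra | apply Hle].
Qed.

Lemma varconst_minus f g Mf1 Mf2 Mg1 Mg2 t :
  continuous_everywhere f -> 0 <= Mf2 -> exp2_bounded lam beta f Mf1 Mf2 ->
  continuous_everywhere g -> 0 <= Mg2 -> exp2_bounded lam beta g Mg1 Mg2 ->
  varconst (fun s => f s - g s) t = varconst f t - varconst g t.
Proof.
  intros Hf HMf Hbf Hg HMg Hbg.
  assert (Hd : forall l, l < 2 * lam -> duhamel l (fun s => f s - g s) t = duhamel l f t - duhamel l g t).
  { intros l Hl. unfold duhamel.
    rewrite (RInt_minf_ext _ (fun s => expmul (- l) f s - expmul (- l) g s)) by (intros; unfold expmul; ring).
    rewrite (RInt_minf_minus _ _ (Mf1 + Mf2) (2 * lam - l) (Mg1 + Mg2) (2 * lam - l));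
      auto using continuous_expmul, exp_bounded_expmul; try lra. }
  unfold varconst. rewrite !Hd by lra. field. lra.
Qed.

Lemma varconst_scal_exp M gam t : lam < gam ->
  varconst (fun s => M * exp (gam * s)) t = M * exp (gam * t) / ((gam - lam) * (gam - lm)).
Proof.
  intros Hgam.
  assert (Hd : forall l, l < gam -> duhamel l (fun s => M * exp (gam * s)) t = M * exp (gam * t) / (gam - l)).
  { intros l Hl. unfold duhamel.
    rewrite (RInt_minf_ext _ (fun s => M * exp ((gam - l) * s)))
      by (intros s; unfold expmul; replace ((gam - l) * s) with (- l * s + gam * s) by ring;
          rewrite exp_plus; ring).
    rewrite RInt_minf_scal_exp by lra.
    replace (gam * t) with (l * t + (gam - l) * t) by ring. rewrite exp_plus. field. lra. }
  unfold varconst. rewrite !Hd by lra. field. lra.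
Qed.

Lemma varconst_abs_bound f M1 M2 t : continuous_everywhere f -> 0 <= M1 -> 0 <= M2 ->
  exp2_bounded lam beta f M1 M2 ->
  Rabs (varconst f t) <=
    M1 * exp (2 * lam * t) / (lam * (2 * lam - lm)) + M2 * exp (beta * t) / ((beta - lam) * (beta - lm)).
Proof.
  intros Hf HM1 HM2 Hb.
  set (f1 := fun s => M1 * exp (2 * lam * s)). set (f2 := fun s => - M2 * exp (beta * s)).
  assert (Hb1 : exp2_bounded lam beta f1 M1 0).
  { intros s. unfold f1. rewrite Rabs_mult, !Rabs_pos_eq by (lra || (left; apply exp_pos)). lra. }
  assert (Hb2 : exp2_bounded lam beta f2 0 M2).
  { intros s. unfold f2. rewrite Rabs_mult, Rabs_Ropp, !Rabs_pos_eq by (lra || (left; apply exp_pos)).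
    lra. }
  assert (Hsum : exp2_bounded lam beta (fun s => f1 s - f2 s) (M1 + M1) (M2 + M2)).
  { intros s. eapply Rle_trans; [apply Rabs_triang |]. rewrite Rabs_Ropp.
    specialize (Hb1 s). specialize (Hb2 s).
    pose proof (exp_pos (2 * lam * s)). pose proof (exp_pos (beta * s)). nra. }
  eapply Rle_trans.
  - apply (varconst_abs_le f (fun s => f1 s - f2 s) M1 M2 (M1 + M1) (M2 + M2)); auto; try lra.
    + intros s. apply (continuous_minus (V := R_NormedModule)); apply continuous_scal_exp.
    + intros s. specialize (Hb s). unfold f1, f2. lra.
  - rewrite (varconst_minus f1 f2 M1 0 0 M2) by first [apply continuous_scal_exp | assumption | lra].
    unfold f1, f2. rewrite !varconst_scal_exp by lra. right. field. repeat split; lra.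
Qed.

End VariationOfConstants.

Lemma abs_sub_le_of_derive (f f' : R -> R) (x y K : R) :
  (forall z, Rmin x y <= z <= Rmax x y -> is_derive f z (f' z) /\ Rabs (f' z) <= K) ->
  Rabs (f y - f x) <= K * Rabs (y - x).
Proof.
  intros Hf. destruct (MVT_gen f x y f') as [z [Hz E]].
  - intros z Hz. apply Hf. lra.
  - intros z Hz. apply continuity_pt_filterlim, (ex_derive_continuous (K := R_AbsRing) (V := R_NormedModule)).
    eexists. apply Hf, Hz.
  - rewrite E, Rabs_mult. apply Rmult_le_compat_r; [apply Rabs_pos | apply Hf, Hz].
Qed.

Lemma Rpower_one_plus_bounds z q : 0 <= z -> q <= 0 -> 1 + q * z <= Rpower (1 + z) q <= 1.
Proof.
  intros Hz Hq. unfold Rpower.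
  assert (H1 : 0 <= ln (1 + z)) by (rewrite <- ln_1; apply ln_le; lra).
  assert (H2 : ln (1 + z) <= z).
  { pose proof (exp_ineq1_le z).
    apply Rle_trans with (ln (exp z)); [apply ln_le; lra | rewrite ln_exp; lra]. }
  split.
  - pose proof (exp_ineq1_le (q * ln (1 + z))).
    assert (q * z <= q * ln (1 + z)) by (apply Rmult_le_compat_neg_l; lra). lra.
  - assert (q * ln (1 + z) <= q * 0) by (apply Rmult_le_compat_neg_l; lra).
    apply Rle_trans with (exp 0); [apply exp_le_mono; lra | rewrite exp_0; lra].
Qed.

Lemma Rpower_pred_mul x q : 0 < x -> Rpower x q = Rpower x (q - 1) * x.
Proof.
  intros Hx. rewrite <- (Rpower_1 x) at 3 by exact Hx. rewrite <- Rpower_plus. f_equal. ring.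
Qed.

Definition tangent_gap (c p y : R) : R := Rpower c p + p * Rpower c (p - 1) * y - Rpower (c + y) p.

Definition tangent_gap_lip (c p : R) : R := Rabs p * Rpower c (p - 1).

Definition tangent_gap_lip0 (c p : R) : R := Rabs p * (1 - p) * (Rpower c (p - 1) / c).

Section TangentGap.

Variables c p : R.
Hypothesis c_pos : 0 < c.
Hypothesis p_lt_1 : p < 1.

Lemma tangent_gap_lip_nonneg : 0 <= tangent_gap_lip c p /\ 0 <= tangent_gap_lip0 c p.
Proof.
  pose proof (exp_pos ((p - 1) * ln c)) as Hm. fold (Rpower c (p - 1)) in Hm. pose proof (Rabs_pos p).
  unfold tangent_gap_lip, tangent_gap_lip0. split; [nra |].
  apply Rmult_le_pos; [nra | apply Rdiv_le_0_compat; lra].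
Qed.

Lemma tangent_gap_0 : tangent_gap c p 0 = 0.
Proof. unfold tangent_gap. rewrite Rplus_0_r. ring. Qed.

Lemma is_derive_tangent_gap y : 0 < c + y ->
  is_derive (tangent_gap c p) y (p * (Rpower c (p - 1) - Rpower (c + y) (p - 1))).
Proof.
  intros Hy. unfold tangent_gap.
  replace (Rpower (c + y) (p - 1)) with (Rpower (c + y) p / (c + y))
    by (rewrite (Rpower_pred_mul (c + y) p) by exact Hy; field; lra).
  unfold Rpower. auto_derive; [lra | field; lra].
Qed.

Lemma tangent_slope_gap_bounds y : 0 <= y ->
  0 <= Rpower c (p - 1) - Rpower (c + y) (p - 1) <= (1 - p) * (Rpower c (p - 1) / c) * y.
Proof.
  intros Hy.
  assert (E : Rpower (c + y) (p - 1) = Rpower c (p - 1) * Rpower (1 + y / c) (p - 1)).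
  { rewrite Rpower_mult_distr; [f_equal; field |..]; try lra.
    apply Rplus_lt_le_0_compat; [lra | apply Rdiv_le_0_compat; lra]. }
  destruct (Rpower_one_plus_bounds (y / c) (p - 1)) as [B1 B2]; [apply Rdiv_le_0_compat; lra | lra |].
  pose proof (exp_pos ((p - 1) * ln c)) as Hm. fold (Rpower c (p - 1)) in Hm.
  rewrite E. split; [nra |].
  replace ((1 - p) * (Rpower c (p - 1) / c) * y) with (Rpower c (p - 1) * (- ((p - 1) * (y / c))))
    by (field; lra).
  nra.
Qed.

Lemma tangent_gap_slope_abs_le y K : 0 <= y -> Rabs p * (Rpower c (p - 1) - Rpower (c + y) (p - 1)) <= K ->
  Rabs (p * (Rpower c (p - 1) - Rpower (c + y) (p - 1))) <= K.
Proof.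
  intros Hy HK. destruct (tangent_slope_gap_bounds y Hy) as [B _].
  rewrite Rabs_mult, (Rabs_pos_eq (_ - _)) by exact B. exact HK.
Qed.

Lemma tangent_gap_abs_lipschitz x y K :
  (forall z, Rmin (Rabs y) (Rabs x) <= z <= Rmax (Rabs y) (Rabs x) ->
     Rabs p * (Rpower c (p - 1) - Rpower (c + z) (p - 1)) <= K) ->
  Rabs (tangent_gap c p (Rabs x) - tangent_gap c p (Rabs y)) <= K * Rabs (x - y).
Proof.
  intros HK. pose proof (Rabs_pos x). pose proof (Rabs_pos y).
  assert (HK0 : 0 <= K).
  { eapply Rle_trans; [| apply (HK (Rabs y)); split; [apply Rmin_l | apply Rmax_l]].
    apply Rmult_le_pos; [apply Rabs_pos | apply tangent_slope_gap_bounds; exact H0]. }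
  eapply Rle_trans.
  - apply (abs_sub_le_of_derive _ (fun z => p * (Rpower c (p - 1) - Rpower (c + z) (p - 1)))).
    intros z Hz. assert (0 <= z) by (eapply Rle_trans; [| apply Hz]; apply Rmin_glb; lra).
    split; [apply is_derive_tangent_gap; lra | apply tangent_gap_slope_abs_le; auto].
  - apply Rmult_le_compat_l; [exact HK0 | apply Rabs_triang_inv2].
Qed.

Lemma tangent_gap_lipschitz x y :
  Rabs (tangent_gap c p (Rabs x) - tangent_gap c p (Rabs y)) <= tangent_gap_lip c p * Rabs (x - y).
Proof.
  apply tangent_gap_abs_lipschitz. unfold tangent_gap_lip. intros z Hz.
  assert (0 <= z) by (eapply Rle_trans; [| apply Hz]; apply Rmin_glb; apply Rabs_pos).
  pose proof (exp_pos ((p - 1) * ln (c + z))). fold (Rpower (c + z) (p - 1)) in H0.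
  pose proof (Rabs_pos p). nra.
Qed.

Lemma tangent_gap_lipschitz_small x y W : Rabs x <= W -> Rabs y <= W ->
  Rabs (tangent_gap c p (Rabs x) - tangent_gap c p (Rabs y))
    <= tangent_gap_lip0 c p * W * Rabs (x - y).
Proof.
  intros Hx Hy. apply tangent_gap_abs_lipschitz. unfold tangent_gap_lip0. intros z Hz.
  assert (0 <= z) by (eapply Rle_trans; [| apply Hz]; apply Rmin_glb; apply Rabs_pos).
  assert (z <= W) by (eapply Rle_trans; [apply Hz | apply Rmax_lub; lra]).
  destruct (tangent_slope_gap_bounds z) as [_ B]; [lra |].
  pose proof (exp_pos ((p - 1) * ln c)). fold (Rpower c (p - 1)) in H1.
  assert (0 <= (1 - p) * (Rpower c (p - 1) / c)) by (apply Rmult_le_pos; [lra | apply Rdiv_le_0_compat; lra]).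
  pose proof (Rabs_pos p).
  replace (Rabs p * (1 - p) * (Rpower c (p - 1) / c) * W)
    with (Rabs p * ((1 - p) * (Rpower c (p - 1) / c) * W))
    by ring.
  apply Rmult_le_compat_l; [lra |]. nra.
Qed.

Lemma continuous_tangent_gap_abs F : continuous_everywhere F ->
  continuous_everywhere (fun s => tangent_gap c p (Rabs (F s))).
Proof.
  intros HF s. apply (continuous_comp (fun s => Rabs (F s)) (tangent_gap c p)).
  - apply continuous_Rabs_comp, HF.
  - apply (ex_derive_continuous (K := R_AbsRing) (V := R_NormedModule)).
    eexists. apply is_derive_tangent_gap. pose proof (Rabs_pos (F s)). lra.
Qed.

Lemma tangent_gap_linear_part y : 0 < c + y ->
  (1 - p) * Rpower c (p - 1) * y + tangent_gap c p y = Rpower c (p - 1) * (c + y) - Rpower (c + y) p.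
Proof. intros Hy. unfold tangent_gap. rewrite (Rpower_pred_mul c p) by exact c_pos. ring. Qed.

Lemma Rpower_lt_tangent v : c < v -> Rpower v p < Rpower c (p - 1) * v.
Proof.
  intros Hv. rewrite (Rpower_pred_mul v p) by lra. apply Rmult_lt_compat_r; [lra |].
  apply exp_increasing. assert (ln c < ln v) by (apply ln_increasing; lra). nra.
Qed.

End TangentGap.

Lemma lt_of_is_derive_pos f f' a b : a < b -> (forall x, is_derive f x (f' x)) ->
  (forall x, a < x < b -> 0 < f' x) -> f a < f b.
Proof.
  intros Hab Hf Hpos. destruct (MVT_cor2 f f' a b Hab) as [x [E Hx]].
  - intros x _. apply is_derive_Reals, Hf.
  - specialize (Hpos x Hx). nra.
Qed.

Lemma continuous_induction (W : R -> R) T0 : continuous_everywhere W ->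
  (forall t, t <= T0 -> 0 < W t) -> (forall s, (forall u, u < s -> 0 < W u) -> 0 < W s) ->
  forall t, 0 < W t.
Proof.
  intros Hc Hstart Hstep t1. destruct (Rlt_le_dec 0 (W t1)) as [| Hneg]; [assumption | exfalso].
  set (S := fun x => forall s, s <= x -> 0 < W s).
  assert (Hbound : bound S).
  { exists t1. intros x Hx. destruct (Rle_dec x t1) as [| Hxt]; [assumption |].
    specialize (Hx t1 ltac:(lra)). lra. }
  destruct (completeness S Hbound (ex_intro _ T0 Hstart)) as [tau [Hub Hleast]].
  assert (Hbefore : forall s, s < tau -> 0 < W s).
  { intros s Hs. destruct (Rlt_le_dec 0 (W s)) as [| Hns]; [assumption | exfalso].
    assert (is_upper_bound S s).
    { intros x Hx. destruct (Rle_dec x s) as [| Hxs]; [assumption |].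
      specialize (Hx s ltac:(lra)). lra. }
    specialize (Hleast s H). lra. }
  destruct (Hc tau _ (locally_pos (W tau) (Hstep tau Hbefore))) as [d Hd].
  assert (Hnext : S (tau + d / 2)).
  { intros s Hs. destruct (Rlt_le_dec s tau) as [| Hts]; [apply Hbefore; assumption |].
    apply Hd. unfold ball; simpl; unfold AbsRing_ball, abs, minus, plus, opp; simpl.
    pose proof (cond_pos d). rewrite Rabs_pos_eq; lra. }
  specialize (Hub _ Hnext). pose proof (cond_pos d). lra.
Qed.

(* [(e^(k t) W')' = e^(k t) G > 0] as long as [W] stays positive. *)
Lemma pos_increasing_of_ode (W W1 G : R -> R) k T0 :
  (forall t, is_derive W t (W1 t)) -> (forall t, is_derive W1 t (- k * W1 t + G t)) ->
  (forall t, 0 < W t -> 0 < G t) -> (forall t, t <= T0 -> 0 < W t /\ 0 < W1 t) ->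
  forall t, 0 < W t /\ 0 < W1 t.
Proof.
  intros HW HW1 HG Hstart.
  set (F := fun t => exp (k * t) * W1 t).
  assert (HF : forall t, is_derive F t (exp (k * t) * G t)).
  { intros t. unfold F. replace (exp (k * t) * G t) with
      (k * exp (k * t) * W1 t + exp (k * t) * (- k * W1 t + G t)) by ring.
    apply (is_derive_mult (fun t => exp (k * t)) W1); [| apply HW1 | intros; apply Rmult_comm].
    auto_derive; auto. ring. }
  assert (HFpos : forall s, T0 < s -> (forall u, u < s -> 0 < W u) -> 0 < F s).
  { intros s Hs HWs. apply Rlt_trans with (F T0).
    - apply Rmult_lt_0_compat; [apply exp_pos | apply Hstart; lra].
    - apply (lt_of_is_derive_pos F (fun t => exp (k * t) * G t)); auto.
      intros x Hx. apply Rmult_lt_0_compat; [apply exp_pos | apply HG, HWs; lra]. }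
  assert (HW1pos : forall s, T0 < s -> (forall u, u < s -> 0 < W u) -> 0 < W1 s).
  { intros s Hs HWs. pose proof (HFpos s Hs HWs). unfold F in H. pose proof (exp_pos (k * s)). nra. }
  assert (HWpos : forall t, 0 < W t).
  { apply (continuous_induction W T0).
    - intros t. apply (ex_derive_continuous (K := R_AbsRing) (V := R_NormedModule)). eexists; apply HW.
    - intros t Ht. apply Hstart, Ht.
    - intros s HWs. destruct (Rle_dec s T0) as [| Hs]; [apply Hstart; assumption |].
      apply Rlt_trans with (W T0); [apply Hstart; lra |].
      apply (lt_of_is_derive_pos W W1); auto; [lra |].
      intros x Hx. apply HW1pos; [lra |]. intros u Hu. apply HWs. lra. }
  intros t. split; [apply HWpos |].
  destruct (Rle_dec t T0) as [| Ht]; [apply Hstart; assumption |].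
  apply HW1pos; [lra | intros; apply HWpos].
Qed.

Lemma exp_small_near_minf lam d : 0 < lam -> 0 < d ->
  exists T, T <= 0 /\ forall t, t <= T -> exp (lam * t) <= d.
Proof.
  intros Hlam Hd. exists (Rmin 0 (ln d / lam)). split; [apply Rmin_l |]. intros t Ht.
  assert (t <= ln d / lam) by (eapply Rle_trans; [exact Ht | apply Rmin_r]).
  rewrite <- (exp_ln d) by exact Hd. apply exp_le_mono.
  apply Rmult_le_compat_l with (r := lam) in H; [| lra].
  replace (lam * (ln d / lam)) with (ln d) in H by (field; lra). exact H.
Qed.

Lemma exp_dominates_near_minf (r : R -> R) lam a A : 0 < lam -> 0 < a ->
  (forall t, t <= 0 -> Rabs (r t) <= A * exp (2 * lam * t)) ->
  exists T, forall t, t <= T -> 0 < a * exp (lam * t) + r t.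
Proof.
  intros Hlam Ha Hr.
  assert (HA : 0 <= A).
  { specialize (Hr 0 (Rle_refl 0)). rewrite Rmult_0_r, exp_0 in Hr. pose proof (Rabs_pos (r 0)). lra. }
  destruct (exp_small_near_minf lam (a / (A + 1)) Hlam) as [T [HT Hsmall]];
    [apply Rdiv_lt_0_compat; lra |].
  exists T. intros t Ht. specialize (Hsmall t Ht). specialize (Hr t ltac:(lra)).
  set (x := exp (lam * t)) in *. assert (Hx : 0 < x) by apply exp_pos.
  assert (E : exp (2 * lam * t) = x * x) by (unfold x; rewrite <- exp_plus; f_equal; ring).
  rewrite E in Hr. pose proof (Rle_abs (- r t)). rewrite Rabs_Ropp in H.
  assert (A * x <= A * (a / (A + 1))) by (apply Rmult_le_compat_l; lra).
  assert (A * (a / (A + 1)) < a).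
  { apply (Rmult_lt_reg_r (A + 1)); [lra |].
    replace (A * (a / (A + 1)) * (A + 1)) with (A * a) by (field; lra). nra. }
  nra.
Qed.

Section UnstableBranch.

Variables c p lam lm beta eps rad : R.
Hypothesis c_pos : 0 < c.
Hypothesis p_lt_1 : p < 1.
Hypothesis lam_pos : 0 < lam.
Hypothesis lm_neg : lm < 0.
Hypothesis beta_ge : 2 * lam <= beta.
Hypothesis eps_pos : 0 < eps.
Hypothesis rad_pos : 0 < rad.

Let L := tangent_gap_lip c p.
Let C := tangent_gap_lip0 c p.
Let eta := C * (eps + 2 * rad).
Let D0 := lam * (2 * lam - lm).
Let Db := (beta - lam) * (beta - lm).

Hypothesis eta_small : eta <= D0 / 2.
Hypothesis beta_large : eta + 2 * L <= Db / 2.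
Hypothesis eps_small : C * (eps * eps) <= D0 * rad / 2.

Lemma branch_constants_pos :
  0 < D0 /\ 0 < Db /\ 0 <= L /\ 0 <= C /\ 0 <= eta /\ 0 <= C * (eps * eps) + rad * eta.
Proof.
  destruct (tangent_gap_lip_nonneg c p c_pos p_lt_1) as [HL HC]. fold L C in HL, HC.
  assert (0 <= eta) by (unfold eta; nra).
  assert (0 <= C * (eps * eps)) by (apply Rmult_le_pos; nra).
  unfold D0, Db. repeat split; nra.
Qed.

(* Near [-oo] the nonlinearity is Lipschitz with the small constant [eta]; for large [t] its global
   Lipschitz constant [L] is beaten by the factor [1 / Db] that [varconst] gains on [e^(beta t)]. *)
Definition weight (t : R) : R := exp (2 * lam * t) + exp (beta * t).

(* [w = eps e^(lam s) + r s] stays positive along the fixed point; [Rabs] only keeps [c + |w| > 0],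
   which makes [source] globally Lipschitz. *)
Definition source (r : R -> R) (s : R) : R := tangent_gap c p (Rabs (eps * exp (lam * s) + r s)).

Definition in_ball (r : R -> R) : Prop :=
  continuous_everywhere r /\ forall s, Rabs (r s) <= rad * weight s.

Definition picard (r : R -> R) : R -> R := varconst lam lm (source r).

Definition picard_iter (n : nat) : R -> R := Nat.iter n picard (fun _ => 0).

Definition fixpt (t : R) : R := real (Lim_seq (fun n => picard_iter n t)).

Lemma weight_pos t : 0 < weight t.
Proof. unfold weight. pose proof (exp_pos (2 * lam * t)). pose proof (exp_pos (beta * t)). lra. Qed.

Lemma weight_le_near t : t <= 0 -> weight t <= 2 * exp (2 * lam * t).
Proof.
  intros Ht. unfold weight. assert (exp (beta * t) <= exp (2 * lam * t)) by (apply exp_le_mono; nra). lra.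
Qed.

Lemma continuous_source r : continuous_everywhere r -> continuous_everywhere (source r).
Proof.
  intros Hr. apply continuous_tangent_gap_abs; auto.
  intros s. apply (continuous_plus (V := R_NormedModule)); [solve_continuous | apply Hr].
Qed.

Lemma source_lipschitz r1 r2 s : Rabs (source r1 s - source r2 s) <= L * Rabs (r1 s - r2 s).
Proof.
  unfold source. eapply Rle_trans; [apply (tangent_gap_lipschitz c p c_pos p_lt_1) |].
  right. f_equal. f_equal. ring.
Qed.

Lemma source_lipschitz_near r1 r2 s : in_ball r1 -> in_ball r2 -> s <= 0 ->
  Rabs (source r1 s - source r2 s) <= eta * Rabs (r1 s - r2 s).
Proof.
  intros [_ Hb1] [_ Hb2] Hs.
  assert (Hsmall : forall r, (forall s, Rabs (r s) <= rad * weight s) ->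
    Rabs (eps * exp (lam * s) + r s) <= eps + 2 * rad).
  { intros r Hr. eapply Rle_trans; [apply Rabs_triang |].
    assert (exp (lam * s) <= 1) by (rewrite <- exp_0; apply exp_le_mono; nra).
    assert (exp (2 * lam * s) <= 1) by (rewrite <- exp_0; apply exp_le_mono; nra).
    pose proof (exp_pos (lam * s)). specialize (Hr s). pose proof (weight_le_near s Hs).
    rewrite Rabs_mult, !Rabs_pos_eq by lra. nra. }
  unfold source. eapply Rle_trans; [apply (tangent_gap_lipschitz_small c p c_pos p_lt_1); auto |].
  right. fold C eta. f_equal. f_equal. ring.
Qed.

Lemma source_diff_bound r1 r2 N : in_ball r1 -> in_ball r2 -> 0 <= N ->
  (forall s, Rabs (r1 s - r2 s) <= N * weight s) ->
  exp2_bounded lam beta (fun s => source r1 s - source r2 s) (N * eta) (N * (eta + 2 * L)).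
Proof.
  intros H1 H2 HN Hd s. destruct branch_constants_pos as (HD0 & HDb & HL & HC & Heta & HM1).
  specialize (Hd s). unfold weight in Hd.
  pose proof (exp_pos (2 * lam * s)). pose proof (exp_pos (beta * s)).
  destruct (Rle_dec s 0) as [Hs | Hs].
  - eapply Rle_trans; [apply source_lipschitz_near; auto |].
    assert (eta * Rabs (r1 s - r2 s) <= eta * (N * (exp (2 * lam * s) + exp (beta * s))))
      by (apply Rmult_le_compat_l; auto).
    assert (0 <= N * L * exp (beta * s)) by (apply Rmult_le_pos; nra). nra.
  - eapply Rle_trans; [apply source_lipschitz |].
    assert (exp (2 * lam * s) <= exp (beta * s)) by (apply exp_le_mono; nra).
    assert (L * Rabs (r1 s - r2 s) <= L * (N * (exp (2 * lam * s) + exp (beta * s))))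
      by (apply Rmult_le_compat_l; auto).
    assert (N * L * exp (2 * lam * s) <= N * L * exp (beta * s)) by (apply Rmult_le_compat_l; nra).
    assert (0 <= N * eta * exp (2 * lam * s)) by (apply Rmult_le_pos; nra).
    assert (0 <= N * eta * exp (beta * s)) by (apply Rmult_le_pos; nra). nra.
Qed.

Lemma in_ball_0 : in_ball (fun _ => 0).
Proof.
  split; [intros s; apply (continuous_const (U := R_UniformSpace)) |].
  intros s. rewrite Rabs_R0. pose proof (weight_pos s). nra.
Qed.

Lemma source_0_bound s : Rabs (source (fun _ => 0) s) <= C * (eps * eps) * exp (2 * lam * s).
Proof.
  pose proof (exp_pos (lam * s)). assert (0 <= eps * exp (lam * s)) by nra.
  unfold source. rewrite Rplus_0_r.
  replace (tangent_gap c p (Rabs (eps * exp (lam * s)))) with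
    (tangent_gap c p (Rabs (eps * exp (lam * s))) - tangent_gap c p (Rabs 0))
    by (rewrite Rabs_R0, tangent_gap_0; ring).
  eapply Rle_trans; [apply (tangent_gap_lipschitz_small c p c_pos p_lt_1 _ _ (eps * exp (lam * s))) |].
  - rewrite Rabs_pos_eq; lra.
  - rewrite Rabs_R0. lra.
  - rewrite Rminus_0_r, (Rabs_pos_eq (eps * _)) by lra. fold C.
    replace (2 * lam * s) with (lam * s + lam * s) by ring. rewrite exp_plus. right; ring.
Qed.

Lemma source_bound r : in_ball r ->
  exp2_bounded lam beta (source r) (C * (eps * eps) + rad * eta) (rad * (eta + 2 * L)).
Proof.
  intros Hr s. destruct branch_constants_pos as (HD0 & HDb & HL & HC & Heta & HM1).
  pose proof (source_diff_bound r (fun _ => 0) rad Hr in_ball_0 ltac:(lra)) as Hd.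
  specialize (Hd ltac:(intros; rewrite Rminus_0_r; apply Hr) s). simpl in Hd.
  pose proof (source_0_bound s).
  replace (source r s) with ((source r s - source (fun _ => 0) s) + source (fun _ => 0) s) by ring.
  eapply Rle_trans; [apply Rabs_triang | lra].
Qed.

Lemma picard_in_ball r : in_ball r -> in_ball (picard r).
Proof.
  intros Hr. destruct branch_constants_pos as (HD0 & HDb & HL & HC & Heta & HM1).
  assert (Hc : continuous_everywhere (source r)) by (apply continuous_source, Hr).
  split; [apply continuous_varconst; auto; lra |]. intros t.
  eapply Rle_trans; [apply (varconst_abs_bound lam lm ltac:(lra) beta lam_pos lm_neg beta_ge _
    (C * (eps * eps) + rad * eta) (rad * (eta + 2 * L))); auto; [nra | apply source_bound, Hr] |].
  fold D0 Db. unfold weight.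
  pose proof (exp_pos (2 * lam * t)). pose proof (exp_pos (beta * t)).
  assert ((C * (eps * eps) + rad * eta) / D0 <= rad) by (apply Rle_div_l; nra).
  assert (rad * (eta + 2 * L) / Db <= rad) by (apply Rle_div_l; nra).
  unfold Rdiv in *. nra.
Qed.

Lemma picard_contraction r1 r2 N t : in_ball r1 -> in_ball r2 -> 0 <= N ->
  (forall s, Rabs (r1 s - r2 s) <= N * weight s) ->
  Rabs (picard r1 t - picard r2 t) <= N / 2 * weight t.
Proof.
  intros H1 H2 HN Hd. destruct branch_constants_pos as (HD0 & HDb & HL & HC & Heta & HM1).
  assert (Hc1 : continuous_everywhere (source r1)) by (apply continuous_source, H1).
  assert (Hc2 : continuous_everywhere (source r2)) by (apply continuous_source, H2).
  unfold picard. rewrite <- (varconst_minus lam lm ltac:(lra) beta lam_pos beta_ge _ _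
    (C * (eps * eps) + rad * eta) (rad * (eta + 2 * L)) (C * (eps * eps) + rad * eta) (rad * (eta + 2 * L)));
    auto using source_bound; try nra.
  eapply Rle_trans; [apply (varconst_abs_bound lam lm ltac:(lra) beta lam_pos lm_neg beta_ge _
    (N * eta) (N * (eta + 2 * L))); auto; try nra |].
  - intros s. apply (continuous_minus (V := R_NormedModule)); auto.
  - apply source_diff_bound; auto.
  - fold D0 Db. unfold weight.
    pose proof (exp_pos (2 * lam * t)). pose proof (exp_pos (beta * t)).
    assert (N * eta / D0 <= N / 2) by (apply Rle_div_l; nra).
    assert (N * (eta + 2 * L) / Db <= N / 2) by (apply Rle_div_l; nra).
    unfold Rdiv in *. nra.
Qed.

Lemma picard_iter_in_ball n : in_ball (picard_iter n).
Proof. induction n; [apply in_ball_0 | apply picard_in_ball, IHn]. Qed.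

Lemma picard_iter_step n t : Rabs (picard_iter (S n) t - picard_iter n t) <= rad * weight t * (/ 2) ^ n.
Proof.
  revert t. induction n as [| n IH]; intros t.
  - simpl. rewrite Rminus_0_r, Rmult_1_r. apply (picard_iter_in_ball 1).
  - change (Rabs (picard (picard_iter (S n)) t - picard (picard_iter n) t) <= rad * weight t * (/ 2) ^ S n).
    eapply Rle_trans; [apply (picard_contraction _ _ (rad * (/ 2) ^ n)); auto using picard_iter_in_ball |].
    + pose proof (pow_le (/ 2) n). nra.
    + intros s. specialize (IH s). lra.
    + simpl. right. field.
Qed.

Lemma fixpt_close n t : Rabs (fixpt t - picard_iter n t) <= 2 * rad * weight t * (/ 2) ^ n.
Proof.
  destruct (geometric_steps_cv (fun n => picard_iter n t) (rad * weight t) (/ 2) ltac:(lra)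
    (fun n => picard_iter_step n t)) as [_ H].
  eapply Rle_trans; [apply H |]. right. field.
Qed.

Lemma continuous_fixpt : continuous_everywhere fixpt.
Proof.
  intros t0. apply continuity_pt_filterlim.
  apply (CVU_continuity picard_iter fixpt t0 (mkposreal 1 Rlt_0_1)).
  - intros e He. destruct (geometric_eventually_small (2 * rad * weight (t0 + 1)) (/ 2) e) as [N HN];
      [lra | exact He |].
    exists N. intros n y Hn Hy. unfold Boule in Hy; simpl in Hy. apply Rabs_def2 in Hy.
    eapply Rle_lt_trans; [apply fixpt_close | eapply Rle_lt_trans; [| apply HN, Hn]].
    assert (weight y <= weight (t0 + 1)) by (unfold weight; apply Rplus_le_compat; apply exp_le_mono; nra).
    pose proof (pow_le (/ 2) n). apply Rmult_le_compat_r; [lra |]. nra.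
  - intros n y _. apply continuity_pt_filterlim, (picard_iter_in_ball n).
  - unfold Boule. simpl. rewrite Rminus_diag, Rabs_R0. lra.
Qed.

Lemma fixpt_bound t : Rabs (fixpt t) <= rad * weight t.
Proof.
  destruct (geometric_steps_cv (fun n => picard_iter n t) (rad * weight t) (/ 2) ltac:(lra)
    (fun n => picard_iter_step n t)) as [[l Hl] _].
  unfold fixpt. rewrite (is_lim_seq_unique _ _ Hl). simpl.
  apply (is_lim_seq_le (fun n => Rabs (picard_iter n t)) (fun _ => rad * weight t) (Rabs l) (rad * weight t));
    [intros n; apply (picard_iter_in_ball n) | apply (is_lim_seq_abs _ l), Hl | apply is_lim_seq_const].
Qed.

Lemma fixpt_in_ball : in_ball fixpt.
Proof. split; [exact continuous_fixpt | exact fixpt_bound]. Qed.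

Lemma fixpt_eq t : picard fixpt t = fixpt t.
Proof.
  apply Rminus_diag_uniq, (Rabs_le_geometric_0 _ (2 * rad * weight t) (/ 2)); [lra |]. intros n.
  replace (picard fixpt t - fixpt t) with
    ((picard fixpt t - picard (picard_iter n) t) + (picard_iter (S n) t - fixpt t))
    by (change (picard_iter (S n) t) with (picard (picard_iter n) t); ring).
  eapply Rle_trans; [apply Rabs_triang |].
  pose proof (fixpt_close (S n) t) as H2. rewrite Rabs_minus_sym in H2.
  assert (H1 : Rabs (picard fixpt t - picard (picard_iter n) t) <= (2 * rad * (/ 2) ^ n) / 2 * weight t).
  { apply picard_contraction; auto using fixpt_in_ball, picard_iter_in_ball.
    - pose proof (pow_le (/ 2) n). nra.
    - intros s. pose proof (fixpt_close n s). lra. }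
  simpl in *. pose proof (weight_pos t). pose proof (pow_le (/ 2) n). lra.
Qed.

Definition branch (t : R) : R := eps * exp (lam * t) + fixpt t.

Definition branch_d (t : R) : R := eps * lam * exp (lam * t) + varconst_d lam lm (source fixpt) t.

Lemma continuous_source_fixpt : continuous_everywhere (source fixpt).
Proof. apply continuous_source, fixpt_in_ball. Qed.

Lemma is_derive_branch t : is_derive branch t (branch_d t).
Proof.
  unfold branch, branch_d. apply (is_derive_plus (fun t => eps * exp (lam * t)) fixpt).
  - auto_derive; auto. ring.
  - apply is_derive_ext with (picard fixpt); [intros s; apply fixpt_eq |].
    apply is_derive_varconst; [lra | apply continuous_source_fixpt].
Qed.

Lemma is_derive_branch_d t :
  is_derive branch_d t ((lam + lm) * branch_d t - lam * lm * branch t + tangent_gap c p (Rabs (branch t))).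
Proof.
  unfold branch_d.
  replace ((lam + lm) * (eps * lam * exp (lam * t) + varconst_d lam lm (source fixpt) t)
      - lam * lm * branch t + tangent_gap c p (Rabs (branch t))) with
    (eps * lam * (lam * exp (lam * t))
      + ((lam + lm) * varconst_d lam lm (source fixpt) t - lam * lm * picard fixpt t + source fixpt t))
    by (rewrite fixpt_eq; unfold branch, source; ring).
  apply (is_derive_plus (fun t => eps * lam * exp (lam * t)) (varconst_d lam lm (source fixpt))).
  - auto_derive; auto. ring.
  - apply is_derive_varconst_d; [lra | apply continuous_source_fixpt].
Qed.

Lemma branch_pos_near_minf : exists T, forall t, t <= T -> 0 < branch t /\ 0 < branch_d t.
Proof.
  destruct branch_constants_pos as (HD0 & HDb & HL & HC & Heta & HM1).
  destruct (exp_dominates_near_minf fixpt lam eps (2 * rad) lam_pos eps_pos) as [T1 H1].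
  { intros t Ht. eapply Rle_trans; [apply fixpt_in_ball |]. pose proof (weight_le_near t Ht). nra. }
  destruct (varconst_d_exp_bound lam lm ltac:(lra) beta lam_pos lm_neg beta_ge (source fixpt)
    (C * (eps * eps) + rad * eta) (rad * (eta + 2 * L)) continuous_source_fixpt ltac:(nra)
    (source_bound fixpt fixpt_in_ball)) as [B HB].
  destruct (exp_dominates_near_minf _ lam (eps * lam) B lam_pos ltac:(nra) HB) as [T2 H2].
  exists (Rmin T1 T2). intros t Ht. split.
  - apply H1. eapply Rle_trans; [exact Ht | apply Rmin_l].
  - apply H2. eapply Rle_trans; [exact Ht | apply Rmin_r].
Qed.

Lemma branch_lim_minf : filterlim branch (Rbar_locally m_infty) (locally 0).
Proof.
  apply (filterlim_locally (F := Rbar_locally m_infty) branch 0). intros e.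
  destruct (exp_small_near_minf lam (e / (eps + 2 * rad + 1)) lam_pos) as [T [HT Hsmall]].
  { apply Rdiv_lt_0_compat; [apply cond_pos | lra]. }
  exists T. intros t Ht. specialize (Hsmall t ltac:(lra)).
  unfold ball; simpl; unfold AbsRing_ball, abs, minus, plus, opp; simpl. rewrite Ropp_0, Rplus_0_r.
  set (x := exp (lam * t)) in *. assert (Hx : 0 < x) by apply exp_pos.
  assert (Hx1 : x <= 1) by (unfold x; rewrite <- exp_0; apply exp_le_mono; nra).
  assert (Hr : Rabs (fixpt t) <= 2 * rad * x).
  { eapply Rle_trans; [apply fixpt_in_ball |]. pose proof (weight_le_near t ltac:(lra)).
    replace (2 * lam * t) with (lam * t + lam * t) in H by ring. rewrite exp_plus in H. fold x in H.
    assert (x * x <= x) by nra.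
    apply Rle_trans with (rad * (2 * (x * x))); [apply Rmult_le_compat_l; lra | nra]. }
  unfold branch. fold x. eapply Rle_lt_trans; [apply Rabs_triang |].
  rewrite Rabs_mult, (Rabs_pos_eq eps), (Rabs_pos_eq x) by lra.
  apply Rle_lt_trans with ((eps + 2 * rad) * (e / (eps + 2 * rad + 1))); [nra |].
  replace ((eps + 2 * rad) * (e / (eps + 2 * rad + 1))) with (e - e / (eps + 2 * rad + 1)) by (field; lra).
  assert (0 < e / (eps + 2 * rad + 1)) by (apply Rdiv_lt_0_compat; [apply cond_pos | lra]). lra.
Qed.

Hypothesis roots_prod : lam * lm = - ((1 - p) * Rpower c (p - 1)).

Lemma branch_pos_increasing t : 0 < branch t /\ 0 < branch_d t.
Proof.
  destruct branch_pos_near_minf as [T HT].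
  apply (pos_increasing_of_ode branch branch_d
    (fun t => - (lam * lm) * branch t + tangent_gap c p (Rabs (branch t))) (- (lam + lm)) T);
    auto using is_derive_branch.
  - intros s. replace (- - (lam + lm) * branch_d s
        + (- (lam * lm) * branch s + tangent_gap c p (Rabs (branch s))))
      with ((lam + lm) * branch_d s - lam * lm * branch s + tangent_gap c p (Rabs (branch s))) by ring.
    apply is_derive_branch_d.
  - intros s Hs. rewrite roots_prod, Rabs_pos_eq by lra. rewrite Ropp_involutive.
    rewrite tangent_gap_linear_part by lra.
    pose proof (Rpower_lt_tangent c p c_pos p_lt_1 (c + branch s) ltac:(lra)). lra.
Qed.

Lemma is_derive_branch_d_ode t : is_derive branch_d t
  ((lam + lm) * branch_d t + Rpower c (p - 1) * (c + branch t) - Rpower (c + branch t) p).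
Proof.
  destruct (branch_pos_increasing t) as [Hw _].
  replace ((lam + lm) * branch_d t + Rpower c (p - 1) * (c + branch t) - Rpower (c + branch t) p) with
    ((lam + lm) * branch_d t - lam * lm * branch t + tangent_gap c p (Rabs (branch t))).
  - apply is_derive_branch_d.
  - rewrite Rabs_pos_eq, roots_prod by lra.
    pose proof (tangent_gap_linear_part c p c_pos (branch t) ltac:(lra)). lra.
Qed.

End UnstableBranch.

Lemma quadratic_roots k mu : 0 < mu -> exists lam lm, 0 < lam /\ lm < 0 /\ lam + lm = - k /\ lam * lm = - mu.
Proof.
  intros Hmu. set (s := sqrt (k * k + 4 * mu)).
  assert (Hs2 : s * s = k * k + 4 * mu) by (apply sqrt_sqrt; nra).
  assert (0 <= s) by apply sqrt_pos.
  exists ((- k + s) / 2), ((- k - s) / 2). repeat split; nra.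
Qed.

Lemma branch_parameters c p lam lm : 0 < c -> p < 1 -> 0 < lam -> lm < 0 ->
  exists beta eps rad, 2 * lam <= beta /\ 0 < eps /\ 0 < rad /\
    tangent_gap_lip0 c p * (eps + 2 * rad) <= lam * (2 * lam - lm) / 2 /\
    tangent_gap_lip0 c p * (eps + 2 * rad) + 2 * tangent_gap_lip c p <= (beta - lam) * (beta - lm) / 2 /\
    tangent_gap_lip0 c p * (eps * eps) <= lam * (2 * lam - lm) * rad / 2.
Proof.
  intros Hc Hp Hlam Hlm.
  set (L := tangent_gap_lip c p). set (C := tangent_gap_lip0 c p). set (D0 := lam * (2 * lam - lm)).
  destruct (tangent_gap_lip_nonneg c p Hc Hp) as [HL HC]. fold L C in HL, HC.
  assert (HD0 : 0 < D0) by (unfold D0; nra).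
  set (m0 := Rmin 1 (D0 / 2)). assert (Hm0 : 0 < m0) by (apply Rmin_glb_lt; lra).
  set (W0 := m0 / (C + 1)). assert (HW0 : 0 < W0) by (apply Rdiv_lt_0_compat; lra).
  assert (HCW : C * W0 <= m0).
  { unfold W0. replace (C * (m0 / (C + 1))) with (m0 - m0 / (C + 1)) by (field; lra).
    assert (0 < m0 / (C + 1)) by (apply Rdiv_lt_0_compat; lra). lra. }
  assert (Hm1 : m0 <= 1) by apply Rmin_l. assert (HmD : m0 <= D0 / 2) by apply Rmin_r.
  exists (2 * lam + 4 * L + 2), (W0 / 2), (W0 / 4).
  replace (W0 / 2 + 2 * (W0 / 4)) with W0 by field.
  repeat split; try lra.
  - assert (1 <= 2 * lam + 4 * L + 2 - lm) by lra. nra.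
  - replace (C * (W0 / 2 * (W0 / 2))) with (C * W0 * (W0 / 4)) by field.
    replace (D0 * (W0 / 4) / 2) with (D0 / 2 * (W0 / 4)) by field.
    apply Rmult_le_compat_r; lra.
Qed.

Lemma exists_increasing_branch c p k : 0 < c -> p < 1 ->
  exists w w1 : R -> R,
    (forall t, is_derive w t (w1 t)) /\
    (forall t, is_derive w1 t (- k * w1 t + Rpower c (p - 1) * (c + w t) - Rpower (c + w t) p)) /\
    (forall t, 0 < w t /\ 0 < w1 t) /\
    filterlim w (Rbar_locally m_infty) (locally 0).
Proof.
  intros Hc Hp.
  assert (Hmu : 0 < (1 - p) * Rpower c (p - 1)) by (apply Rmult_lt_0_compat; [lra | apply exp_pos]).
  destruct (quadratic_roots k _ Hmu) as (lam & lm & Hlam & Hlm & Hsum & Hprod).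
  destruct (branch_parameters c p lam lm Hc Hp Hlam Hlm) as (beta & eps & rad & Hb & He & Hr & H1 & H2 & H3).
  exists (branch c p lam lm eps), (branch_d c p lam lm eps). split; [| split; [| split]].
  - intros t. eapply is_derive_branch; eauto.
  - intros t. replace (- k) with (lam + lm) by lra. eapply is_derive_branch_d_ode; eauto.
  - intros t. eapply branch_pos_increasing; eauto.
  - eapply branch_lim_minf; eauto.
Qed.

Section EmdenFowlerProfile.

Variables (c p a l : R) (w w1 : R -> R).
Hypothesis w_derive : forall t, is_derive w t (w1 t).
Hypothesis w1_derive : forall t,
  is_derive w1 t (- (2 * a - 1) * w1 t + a * (1 - a) * (c + w t) - Rpower (c + w t) p).
Hypothesis cw_pos : forall t, 0 < c + w t.

Definition profile (x : R) : R := (c + w (ln x + l)) * Rpower x a.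

Definition profile_d (x : R) : R := Rpower x a / x * (a * (c + w (ln x + l)) + w1 (ln x + l)).

Lemma is_derive_profile x : 0 < x -> is_derive profile x (profile_d x).
Proof.
  intros Hx. unfold profile, profile_d.
  assert (ex_derive w (ln x + l)) by (eexists; apply w_derive).
  rewrite <- (is_derive_unique _ _ _ (w_derive (ln x + l))). unfold Rpower.
  auto_derive; [split; auto |]. change (fun y => w y) with w. field. lra.
Qed.

Lemma is_derive_profile_d x : 0 < x ->
  is_derive profile_d x (- (Rpower x a / (x * x) * Rpower (c + w (ln x + l)) p)).
Proof.
  intros Hx. unfold profile_d.
  assert (ex_derive w (ln x + l)) by (eexists; apply w_derive).
  assert (ex_derive w1 (ln x + l)) by (eexists; apply w1_derive).
  unfold Rpower at 1 2. auto_derive; [repeat split; auto; lra |].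
  change (fun y => w y) with w; change (fun y => w1 y) with w1.
  rewrite (is_derive_unique _ _ _ (w_derive _)), (is_derive_unique _ _ _ (w1_derive _)).
  field. lra.
Qed.

Lemma Derive2_profile x : 0 < x ->
  Derive_n profile 2 x = - (Rpower x a / (x * x) * Rpower (c + w (ln x + l)) p).
Proof.
  intros Hx. simpl. rewrite (Derive_ext_loc _ profile_d).
  - apply is_derive_unique, is_derive_profile_d, Hx.
  - apply (filter_imp (fun y => 0 < y)); [| apply locally_pos, Hx].
    intros y Hy. apply is_derive_unique, is_derive_profile, Hy.
Qed.

Lemma profile_C2 : C2_on_pos profile.
Proof.
  intros x Hx. split; [| split].
  - eexists. apply is_derive_profile, Hx.
  - exists (- (Rpower x a / (x * x) * Rpower (c + w (ln x + l)) p)).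
    apply is_derive_ext_loc with profile_d; [| apply is_derive_profile_d, Hx].
    apply (filter_imp (fun y => 0 < y)); [| apply locally_pos, Hx].
    intros y Hy. symmetry. apply is_derive_unique, is_derive_profile, Hy.
  - apply continuous_ext_loc with (fun y => - (Rpower y a / (y * y) * Rpower (c + w (ln y + l)) p)).
    { apply (filter_imp (fun y => 0 < y)); [| apply locally_pos, Hx].
      intros y Hy. symmetry. apply Derive2_profile, Hy. }
    assert (ex_derive w (ln x + l)) by (eexists; apply w_derive).
    pose proof (cw_pos (ln x + l)).
    apply (ex_derive_continuous (K := R_AbsRing) (V := R_NormedModule)).
    unfold Rpower. auto_derive. repeat split; auto; try lra. apply Rmult_integral_contrapositive; lra.
Qed.

Lemma profile_ode sigma x : sigma + a * p = a - 2 -> 0 < x ->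
  Derive_n profile 2 x + Rpower x sigma * Rpower (profile x) p = 0.
Proof.
  intros Hsigma Hx. rewrite Derive2_profile by exact Hx. unfold profile.
  pose proof (cw_pos (ln x + l)).
  rewrite <- Rpower_mult_distr, Rpower_mult by (try apply exp_pos; lra).
  replace (Rpower x sigma * (Rpower (c + w (ln x + l)) p * Rpower x (a * p))) with
    (Rpower x (sigma + a * p) * Rpower (c + w (ln x + l)) p) by (rewrite Rpower_plus; ring).
  rewrite Hsigma. replace (a - 2) with (a + -2) by ring. rewrite Rpower_plus.
  replace (Rpower x (-2)) with (/ (x * x)).
  - field. lra.
  - unfold Rpower. replace (-2 * ln x) with (- (ln x + ln x)) by ring.
    rewrite exp_Ropp, exp_plus, exp_ln by exact Hx. reflexivity.
Qed.

Lemma profile_ratio_lim : 0 < c -> filterlim w (Rbar_locally m_infty) (locally 0) ->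
  filterlim (fun x => profile x / (c * Rpower x a)) (at_right 0) (locally 1).
Proof.
  intros Hc Hw.
  apply filterlim_ext_loc with (fun x => (c + w (ln x + l)) / c).
  { exists (mkposreal 1 Rlt_0_1). intros x _ Hx. unfold profile.
    pose proof (exp_pos (a * ln x)). fold (Rpower x a) in H. field. lra. }
  apply (filterlim_comp _ _ _ (fun x => w (ln x + l)) (fun y => (c + y) / c) _ (locally 0)).
  - apply (filterlim_comp _ _ _ (fun x => ln x + l) w _ (Rbar_locally m_infty)); [| exact Hw].
    apply (filterlim_comp _ _ _ ln (fun t => t + l) _ (Rbar_locally m_infty)); [apply is_lim_ln_0 |].
    intros P [M HM]. exists (M - l). intros t Ht. apply HM. lra.
  - replace 1 with ((c + 0) / c) by (field; lra).
    apply (ex_derive_continuous (K := R_AbsRing) (V := R_NormedModule) (fun y => (c + y) / c)).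
    auto_derive. lra.
Qed.

End EmdenFowlerProfile.

Lemma exp_a_bounds sigma p : -2 < sigma -> p < -1 - sigma -> 0 < exp_a sigma p < 1.
Proof. intros Hs Hp. unfold exp_a. split; [apply Rdiv_lt_0_compat | apply Rlt_div_l]; lra. Qed.

Lemma c_a_pow_pred sigma p : -2 < sigma -> p < -1 - sigma ->
  Rpower (c_a sigma p) (p - 1) = exp_a sigma p * (1 - exp_a sigma p).
Proof.
  intros Hs Hp. pose proof (exp_a_bounds sigma p Hs Hp).
  unfold c_a. rewrite Rpower_mult. replace (1 / (p - 1) * (p - 1)) with 1 by (field; lra).
  apply Rpower_1. nra.
Qed.

Theorem theorem5p1 (sigma p : R) (hsigma : -2 < sigma) (hp : p < -1 - sigma) :
  exists U : R -> R -> R,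
    (forall alpha, 0 < alpha ->
       (forall x, 0 < x -> 0 < U alpha x) /\
       C2_on_pos (U alpha) /\
       (forall x, 0 < x ->
          Derive_n (U alpha) 2 x + Rpower x sigma * Rpower (U alpha x) p = 0) /\
       filterlim (fun x => U alpha x / u_a sigma p x) (at_right 0) (locally 1)) /\
    (forall alpha1 alpha2, alpha1 > alpha2 -> alpha2 > 0 ->
       forall x, 0 < x ->
         U alpha1 x > U alpha2 x /\ U alpha2 x > u_a sigma p x).
Proof.
  set (a := exp_a sigma p). set (c := c_a sigma p).
  pose proof (exp_a_bounds sigma p hsigma hp) as Ha. fold a in Ha.
  assert (Hc : 0 < c) by apply exp_pos.
  destruct (exists_increasing_branch c p (2 * a - 1) Hc ltac:(lra)) as (w & w1 & Hw & Hw1 & Hpos & Hlim).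
  assert (Hm : Rpower c (p - 1) = a * (1 - a)) by exact (c_a_pow_pred sigma p hsigma hp).
  rewrite Hm in Hw1.
  assert (Hcw : forall t, 0 < c + w t) by (intros t; specialize (Hpos t); lra).
  exists (fun alpha => profile c a (ln alpha) w). split.
  - intros alpha Halpha. split; [| split; [| split]].
    + intros x Hx. apply Rmult_lt_0_compat; [apply Hcw | apply exp_pos].
    + apply (profile_C2 c p a (ln alpha) w w1); auto.
    + intros x Hx. apply (profile_ode c p a (ln alpha) w w1); auto. unfold a, exp_a. field. lra.
    + apply profile_ratio_lim; auto.
  - intros alpha1 alpha2 H12 H2 x Hx. unfold u_a, profile. fold a c.
    assert (Hl : ln x + ln alpha2 < ln x + ln alpha1) by (apply Rplus_lt_compat_l, ln_increasing; lra).
    pose proof (lt_of_is_derive_pos w w1 _ _ Hl Hw (fun t _ => proj2 (Hpos t))).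
    pose proof (proj1 (Hpos (ln x + ln alpha2))). pose proof (exp_pos (a * ln x)). fold (Rpower x a) in H1.
    split; apply Rmult_lt_compat_r; lra.
Qed.
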